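(* There are absolute constants $c,C>0$ such that the following holds. Let $G$ be a finite abelian group, let $A\subset G$ be nonempty, and let $\alpha=|A|/|G|$. Then there exist a set of characters $S\subset\hat G$ with $|S|\le C\log(2/\alpha)$, a radius $\rho\ge c/\log(2/\alpha)$, and a positive integer $k\le C\log(2/\alpha)$ such that the Bohr set $B(S,\rho)$ satisfies $B(S,\rho)\subset kA-kA$.
   Context: $\hat G$ is the group of homomorphisms $G\to S^1=\{z\in\mathbb{C}:|z|=1\}$. For $S\subset\hat G$ and $\rho>0$, $B(S,\rho)=\{x\in G:|\gamma(x)-1|\le\rho\text{ for all }\gamma\in S\}$; $|S|$ is its rank and $\rho$ its radius. $kA-kA=\{a_1+\dots+a_k-b_1-\dots-b_k:a_i,b_i\in A\}$. $\log$ is natural. *)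

From HB Require Import structures.
From mathcomp Require Import all_boot all_algebra.
From mathcomp Require Import reals Rstruct complex exp.
Set Implicit Arguments. Unset Strict Implicit. Unset Printing Implicit Defensive.
Import GRing.Theory Num.Theory.
Local Open Scope ring_scope.

Notation RR := Rdefinitions.R.
Notation CC := (complex.complex RR).

Definition is_character (G : finZmodType) (gamma : G -> CC) : Prop :=
  (forall x, `|gamma x| = 1) /\ (forall x y, gamma (x + y) = gamma x * gamma y).

Definition bohr (G : finZmodType) (S : seq (G -> CC)) (rho : RR) (x : G) : Prop :=
  forall gamma, List.In gamma S -> `|gamma x - 1| <= (rho%:C)%C.

Definition iter_diff (G : finZmodType) (k : nat) (A : {set G}) (x : G) : Prop :=
  exists a b : 'I_k -> G,
     (forall i, a i \in A) /\ (forall i, b i \in A) /\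
     (x = \sum_(i < k) a i - \sum_(i < k) b i).

(* Chang's argument. Let Spec be the set of characters gamma with
   |sum_(a in A) gamma a| >= |A| / 2, and S a maximal dissociated subset of
   Spec, so that every element of Spec is a product of elements of S and of
   their conjugates. Choose |c_gamma| = 1 with c_gamma sum_(a in A) gamma a >= 0.
   By dissociativity the Riesz product
   prod_(gamma in S) (1 + 3/5 Re (c_gamma gamma)) has total mass |G|; since it
   dominates (4/5)^|S| 2^(sum_gamma Re (c_gamma gamma)), Jensen's inequality on
   A gives |S| = O(log (2 / alpha)).
   If |S| rho <= 1, then Re gamma x >= 0 for x in B(S, rho) and gamma in Spec.
   If moreover x were not in kA - kA, the moment
   sum_gamma |sum_(a in A) gamma a|^(2k) gamma x would vanish. There the
   trivial character contributes |A|^(2k), while by Parseval the negative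
   terms, which come from characters outside Spec, add up to at most
   (|A| / 2)^(2k-2) |G| |A|: this is impossible once 4^(k-1) |A| > |G|, which
   holds for some k = O(log (2 / alpha)). *)

From mathcomp Require Import all_boot all_algebra.
From mathcomp Require Import all_fingroup cyclic all_field classfun character.
From mathcomp Require Import reals Rstruct complex exp.
From mathcomp Require Import interval_inference sequences convex ring lra.
From Stdlib Require Import Classical.
Import order.Order.TTheory GRing.Theory Num.Theory.
Local Open Scope ring_scope.

Set Implicit Arguments.
Unset Strict Implicit.
Unset Printing Implicit Defensive.

Section Characters.
Variable G : finZmodType.
Implicit Types (g h : G -> CC) (A : {set G}).

Definition fourier A g : CC := \sum_(a in A) g a.

Lemma character_neq0 g x : is_character g -> g x != 0.
Proof. by case=> n1 _; rewrite -normr_eq0 n1 oner_eq0. Qed.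

Lemma character_mul_conj g x : is_character g -> g x * (g x)^* = 1.
Proof. by case=> n1 _; rewrite -normCK n1 expr1n. Qed.

Lemma character0 g : is_character g -> g 0 = 1.
Proof.
move=> gc; apply: (mulfI (character_neq0 0 gc)).
by rewrite -gc.2 addr0 mulr1.
Qed.

Lemma characterN g x : is_character g -> g (- x) = (g x)^*.
Proof.
move=> gc; apply: (mulIf (character_neq0 x gc)).
by rewrite -gc.2 addNr character0 // mulrC character_mul_conj.
Qed.

Lemma character_sum I (r : seq I) (P : pred I) (F : I -> G) g : is_character g ->
  g (\sum_(i <- r | P i) F i) = \prod_(i <- r | P i) g (F i).
Proof. by move=> gc; apply: (big_morph g gc.2 (character0 gc)). Qed.

Lemma character1 : is_character (fun _ : G => 1 : CC).
Proof. by split=> [x|x y]; rewrite ?normr1 ?mulr1. Qed.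

Lemma character_mulf g h :
  is_character g -> is_character h -> is_character (fun x => g x * h x).
Proof.
move=> gc hc; split=> [x|x y]; first by rewrite normrM gc.1 hc.1 mulr1.
by rewrite gc.2 hc.2 mulrACA.
Qed.

Lemma character_conjC g : is_character g -> is_character (fun x => (g x)^*).
Proof.
move=> gc; split=> [x|x y]; first by rewrite norm_conjC gc.1.
by rewrite gc.2 rmorphM.
Qed.

Lemma sum_character_eq0 g x0 : is_character g -> g x0 != 1 -> \sum_x g x = 0.
Proof.
move=> gc gx0; have shift : \sum_x g x = g x0 * \sum_x g x.
  rewrite mulr_sumr (reindex_inj (addrI x0)) /=.
  by apply: eq_bigr => x _; rewrite gc.2.
have : (g x0 - 1) * \sum_x g x = 0 by rewrite mulrBl -shift mul1r subrr.
by move/eqP; rewrite mulf_eq0 subr_eq0 (negPf gx0) => /eqP.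
Qed.

Lemma fourier_exprn A g k : is_character g ->
  fourier A g ^+ k = \sum_(p in ffun_on (mem A)) g (\sum_(i < k) p i).
Proof.
move=> gc; rewrite -[k in LHS]card_ord -prodr_const /fourier bigA_distr_big.
by apply: eq_bigr => p _; rewrite character_sum.
Qed.

End Characters.

Lemma prim_root_exists (F : numClosedFieldType) n :
  (0 < n)%N -> {z : F | n.-primitive_root z}.
Proof.
pose p : {poly F} := 'X^n - 1; have [r Dp] := closed_field_poly_normal p.
move=> n_gt0; apply/sigW; rewrite (monicP _) ?monicXnsubC // scale1r in Dp.
have rn1 : all n.-unity_root r by apply/allP=> z; rewrite -root_prod_XsubC -Dp.
have sz_r : (n < (size r).+1)%N.
  by rewrite -(size_prod_XsubC r id) -Dp size_XnsubC.
have [|z] := hasP (has_prim_root n_gt0 rn1 _ sz_r); last by exists z.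
by rewrite -separable_prod_XsubC -Dp separable_Xn_sub_1 // pnatr_eq0 -lt0n.
Qed.

Lemma norm_prim_root (R : numDomainType) n (z : R) :
  n.-primitive_root z -> `|z| = 1.
Proof.
move=> zn; have : `|z| ^+ n == 1 by rewrite -normrX (prim_expr_order zn) normr1.
by rewrite pexpr_eq1 ?(prim_order_gt0 zn) // => /eqP.
Qed.

(* M is #|G| (or 2 if G is trivial), written so that 'I_M is a ring. Composing
   homomorphisms G -> 'I_M with a primitive M-th root of unity yields all the
   characters of G. *)
Section Homs.
Variable G : finZmodType.
Local Notation M := (Zp_trunc #|G|).+2.
Implicit Types f : {ffun G -> 'I_M}.

Lemma card_dvd_Zp_trunc : (#|G| %| M)%N.
Proof.
have [G_gt1|] := ltnP 1 #|G|; first by rewrite Zp_cast.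
have : (0 < #|G|)%N by apply/card_gt0P; exists 0.
by case: #|G| => [|[|]].
Qed.

Definition is_hom f : bool :=
  [forall x, forall y, f (x + y) == f x + f y].

Lemma is_homP f : reflect {morph f : x y / x + y} (is_hom f).
Proof.
apply: (iffP forallP) => [fD x y|fD x]; last by apply/forallP => y; rewrite fD.
exact: eqP (forallP (fD x) y).
Qed.

Lemma homf0 f : is_hom f -> f 0 = 0.
Proof. by move/is_homP => fD; apply: (addrI (f 0)); rewrite -fD !addr0. Qed.

Lemma is_hom0 : is_hom 0.
Proof. by apply/is_homP => x y; rewrite !ffunE addr0. Qed.

Lemma is_homDl f g : is_hom f -> is_hom (f + g) = is_hom g.
Proof.
move=> /is_homP fD; apply/is_homP/is_homP => gD x y; last first.
  by rewrite !ffunE fD gD addrACA.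
by have := gD x y; rewrite !ffunE fD addrACA => /addrI.
Qed.

(* Linear characters of the abelian group G separate points, and their values
   are M-th roots of unity, i.e. powers of a primitive one. *)
Lemma separating_hom y : y != 0 -> exists2 f, is_hom f & f y != 0.
Proof.
move=> y0; have [z z_prim] := C_prim_root_exists (ltn0Sn M.-1).
have [i y_ker] : exists i, y \notin cfker 'chi[[set: G]]_i.
  apply/existsP; rewrite -negb_forall; apply: contra y0 => /forallP y_ker.
  have : y \in \bigcap_i cfker 'chi[[set: G]]_i by apply/bigcapP => i _.
  by rewrite TI_cfker_irr inE.
have lin : 'chi[[set: G]]_i \is a linear_char.
  exact/char_abelianP/FinRing.zmod_abelian.
have chiM x : 'chi[[set: G]]_i x ^+ M = 1.
  have xG : x \in [set: G] by rewrite inE.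
  have /dvdnP[q ->] : (#[x]%g %| M)%N.
    by apply: dvdn_trans card_dvd_Zp_trunc; rewrite -cardsT order_dvdG.
  by rewrite mulnC exprM lin_char_unity_root // expr1n.
pose f x := sval (prim_rootP z_prim (chiM x)).
have fE x : 'chi[[set: G]]_i x = z ^+ f x by rewrite /f; case: prim_rootP.
exists (finfun f).
  apply/is_homP => u v; rewrite !ffunE; apply: val_inj => /=.
  have : z ^+ f (u + v) == z ^+ (f u + f v)%N.
    by rewrite -!fE exprD -!fE -lin_charM ?inE.
  by rewrite (eq_prim_root_expr z_prim) => /eqP; rewrite modn_small ?ltn_ord.
rewrite ffunE; apply: contra y_ker => /eqP fy0.
by rewrite cfkerEirr inE lin_char1 // fE fy0 expr0.
Qed.

End Homs.

Section Dual.
Variable G : finZmodType.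
Local Notation M := (Zp_trunc #|G|).+2.
Variable w : CC.
Hypothesis w_prim : M.-primitive_root w.
Implicit Types (f : {ffun G -> 'I_M}) (A : {set G}).

Definition chi f : G -> CC := fun x => w ^+ f x.

Lemma exprw_addZp (i j : 'I_M) : w ^+ (i + j)%R = w ^+ i * w ^+ j.
Proof. by rewrite -exprD -(prim_expr_mod w_prim (i + j)). Qed.

Lemma eq_exprw (i j : 'I_M) : (w ^+ i == w ^+ j) = (i == j).
Proof. by rewrite (eq_prim_root_expr w_prim) !modn_small. Qed.

Lemma chi_character f : is_hom f -> is_character (chi f).
Proof.
move=> /is_homP fD; split=> [x|x y].
  by rewrite normrX (norm_prim_root w_prim) expr1n.
by rewrite /chi fD exprw_addZp.
Qed.

Lemma chi0 x : chi 0 x = 1.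
Proof. by rewrite /chi ffunE expr0. Qed.

Lemma chi_mul_conj f x y : is_hom f -> chi f x * (chi f y)^* = chi f (x - y).
Proof. by move/chi_character=> fc; rewrite fc.2 (characterN _ fc). Qed.

Lemma sum_chi_eq0 f : is_hom f -> f != 0 -> \sum_x chi f x = 0.
Proof.
move=> fh f0; have [x0 fx0] : exists x0, f x0 != 0.
  apply/existsP; apply: contraNT f0 => /existsPn f0.
  by apply/eqP/ffunP => x; rewrite ffunE; apply/eqP/negbNE/f0.
apply: (sum_character_eq0 (x0 := x0) (chi_character fh)).
by rewrite /chi -(expr0 w) (eq_exprw _ 0).
Qed.

Lemma sum_homs_chi_eq0 y : y != 0 -> \sum_(f | is_hom f) chi f y = 0.
Proof.
move=> y0; have [f0 f0h f0y] := separating_hom y0.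
have shift : \sum_(f | is_hom f) chi f y = w ^+ f0 y * \sum_(f | is_hom f) chi f y.
  rewrite mulr_sumr (reindex_inj (addrI f0)) /=.
  apply: eq_big => [f|f _]; first exact: is_homDl.
  by rewrite /chi ffunE exprw_addZp.
have : (w ^+ f0 y - 1) * \sum_(f | is_hom f) chi f y = 0.
  by rewrite mulrBl -shift mul1r subrr.
move/eqP; rewrite mulf_eq0 subr_eq0 -(expr0 w) (eq_exprw _ 0) (negPf f0y).
by move/eqP.
Qed.

Lemma card_homs : #|[pred f : {ffun G -> 'I_M} | is_hom f]| = #|G|.
Proof.
apply/eqP; rewrite -(eqr_nat CC).
have -> : #|[pred f : {ffun G -> 'I_M} | is_hom f]|%:R =
          \sum_x \sum_(f | is_hom f) chi f x.
  rewrite (bigD1 (0 : G)) //= [X in _ + X]big1 => [|x /sum_homs_chi_eq0 //].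
  by rewrite addr0 (eq_bigr (fun _ => 1)) ?sumr_const // => f fh; rewrite /chi homf0.
rewrite exchange_big (bigD1 (0 : {ffun G -> 'I_M})) ?is_hom0 //=.
rewrite [X in _ + X]big1 => [|f /andP[fh f0]]; last exact: sum_chi_eq0.
by rewrite addr0 (eq_bigr (fun _ => 1)) ?sumr_const ?card_ord // => x _; rewrite chi0.
Qed.

Lemma sum_homs_chi y : \sum_(f | is_hom f) chi f y = (#|G| * (y == 0))%:R.
Proof.
have [->|y0] := eqVneq y 0; last by rewrite sum_homs_chi_eq0 ?muln0.
rewrite muln1 (eq_bigr (fun _ => 1)) => [|f fh]; last by rewrite /chi homf0.
by rewrite sumr_const card_homs.
Qed.

Lemma parseval A :
  \sum_(f | is_hom f) fourier A (chi f) * (fourier A (chi f))^* = (#|G| * #|A|)%:R.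
Proof.
transitivity (\sum_(f | is_hom f) \sum_(a in A) \sum_(b in A) chi f (a - b)).
  apply: eq_bigr => f fh; rewrite /fourier rmorph_sum big_distrlr /=.
  by apply: eq_bigr => a _; apply: eq_bigr => b _; rewrite chi_mul_conj.
rewrite exchange_big /= (eq_bigr (fun _ => #|G|%:R)) => [|a aA].
  by rewrite sumr_const -mulrnA.
rewrite exchange_big /= (bigD1 a) //= [X in _ + X]big1 => [|b /andP[_ ba]].
  by rewrite sum_homs_chi subrr eqxx muln1 addr0.
by rewrite sum_homs_chi subr_eq0 eq_sym (negPf ba) muln0.
Qed.

(* Expanding the 2k-th moment as a sum over k-tuples of A shows that it counts
   representations of x as an element of kA - kA. *)
Lemma sum_fourier_notin_iter_diff A k x : ~ iter_diff k A x ->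
  \sum_(f | is_hom f)
    fourier A (chi f) ^+ k * (fourier A (chi f) ^+ k)^* * (chi f x)^* = 0.
Proof.
move=> x_notin.
transitivity (\sum_(f | is_hom f) \sum_(p in ffun_on (mem A)) \sum_(q in ffun_on (mem A))
   chi f ((\sum_(i < k) p i - \sum_(i < k) q i) - x)).
  apply: eq_bigr => f fh; rewrite (fourier_exprn _ _ (chi_character fh)).
  rewrite rmorph_sum big_distrlr /= mulr_suml; apply: eq_bigr => p _.
  by rewrite mulr_suml; apply: eq_bigr => q _; rewrite !chi_mul_conj.
rewrite exchange_big big1 // => p pA; rewrite exchange_big big1 // => q qA.
rewrite sum_homs_chi subr_eq0; case: eqP => [x_diff|]; last by rewrite muln0.
case: x_notin; exists p, q; split; first by move=> i; apply: (ffun_onP pA).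
by split; [move=> i; apply: (ffun_onP qA) | rewrite x_diff].
Qed.

End Dual.

Lemma In_mem (T : eqType) (x : T) s : List.In x s <-> x \in s.
Proof.
elim: s => [|y s IHs] //=; rewrite inE; split.
  by case=> [->|/IHs ->]; rewrite ?eqxx ?orbT.
by case/orP=> [/eqP->|/IHs]; [left|right].
Qed.

Lemma norm_mul_sub1 (z t : CC) : `|z| = 1 -> `|z * t - 1| <= `|z - 1| + `|t - 1|.
Proof.
move=> z1; have -> : z * t - 1 = z * (t - 1) + (z - 1) by ring.
by rewrite (le_trans (ler_normD _ _)) // normrM z1 mul1r addrC.
Qed.

Section Dissociated.
Variable G : finZmodType.
Implicit Types (g l : G -> CC) (lam : seq (G -> CC)) (c : 'I_3) (e : seq 'I_3).

(* An exponent c : 'I_3 encodes 0, 1 or -1 = 2 (mod 3); signed_prod lam e is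
   the character prod_i lam_i ^ e_i. *)
Definition signpow c (z : CC) : CC :=
  if c == 0 then 1 else if c == 1 then z else z^*.

Fixpoint signed_prod lam e (x : G) : CC :=
  match lam, e with
  | l :: lam', c :: e' => signpow c (l x) * signed_prod lam' e' x
  | _, _ => 1
  end.

Definition all_characters lam := forall l, List.In l lam -> is_character l.

Definition dissociated lam := forall e, size e = size lam ->
  has (fun c => c != 0) e -> exists x, signed_prod lam e x != 1.

Definition in_span lam g :=
  exists2 e, size e = size lam & forall x, g x = signed_prod lam e x.

Lemma all_characters_behead l lam :
  all_characters (l :: lam) -> all_characters lam.
Proof. by move=> lamc l' l'lam; apply: lamc; right. Qed.

Lemma signpow_character c g :
  is_character g -> is_character (fun x => signpow c (g x)).
Proof.
rewrite /signpow => gc; case: (c == 0); first exact: character1.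
by case: (c == 1) => //; apply: character_conjC.
Qed.

Lemma signed_prod_character lam e :
  all_characters lam -> is_character (signed_prod lam e).
Proof.
elim: lam e => [|l lam IHlam] [|c e] lamc /=; try exact: character1.
apply: character_mulf; first by apply/signpow_character/lamc; left.
exact/IHlam/all_characters_behead/lamc.
Qed.

Lemma signpowN c z : signpow (- c) z = (signpow c z)^*.
Proof. by case: c => [[|[|[|//]]] ?]; rewrite /signpow /= ?conjC1 ?conjCK. Qed.

Lemma signed_prodN lam e x :
  signed_prod lam (map -%R e) x = (signed_prod lam e x)^*.
Proof.
elim: lam e => [|l lam IHlam] [|c e] /=; rewrite ?conjC1 //.
by rewrite rmorphM /= signpowN IHlam.
Qed.

Lemma signpow0 z : signpow 0 z = 1. Proof. by []. Qed.
Lemma signpow1 z : signpow 1 z = z. Proof. by []. Qed.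
Lemma signpowN1 z : signpow (-1) z = z^*. Proof. by []. Qed.

Lemma signed_prod_cons0 l lam e x :
  signed_prod (l :: lam) (0 :: e) x = signed_prod lam e x.
Proof. by rewrite /= signpow0 mul1r. Qed.

Lemma signed_prod_nseq0 lam x : signed_prod lam (nseq (size lam) 0) x = 1.
Proof. by elim: lam => [|l lam IHlam] //=; rewrite /signpow eqxx mul1r. Qed.

Lemma in_span_cons l lam g : in_span lam g -> in_span (l :: lam) g.
Proof.
case=> e se ge; exists (0 :: e); first by rewrite /= se.
by move=> x; rewrite signed_prod_cons0.
Qed.

Lemma in_span_head l lam : in_span (l :: lam) l.
Proof.
exists (1 :: nseq (size lam) 0); first by rewrite /= size_nseq.
by move=> x; rewrite /= signed_prod_nseq0 mulr1.
Qed.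

Lemma dissociated_behead l lam : dissociated (l :: lam) -> dissociated lam.
Proof.
move=> d e se ne0; have [|//|x] := d (0 :: e); first by rewrite /= se.
by rewrite signed_prod_cons0; exists x.
Qed.

Lemma dissociated_cons lam g : all_characters lam -> is_character g ->
  dissociated lam -> ~ in_span lam g -> dissociated (g :: lam).
Proof.
move=> lamc gc lamd g_notin [//|c e] [se] ce; apply: NNPP => no_x.
have prod1 x : signpow c (g x) * signed_prod lam e x = 1.
  by apply/eqP; apply: contra_notT no_x => ne1; exists x.
clear no_x.
have pc := signed_prod_character e lamc.
have p_neq0 x := character_neq0 x pc.
case: c ce prod1 => [[|[|[|//]]] ?] /= ce prod1; rewrite /signpow /= in prod1.
- have [x] := lamd e se ce; by rewrite -[signed_prod _ _ _]mul1r prod1 eqxx.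
- apply: g_notin; exists (map -%R e); first by rewrite size_map.
  move=> x; rewrite signed_prodN; apply: (mulIf (p_neq0 x)).
  by rewrite prod1 mulrC character_mul_conj.
- apply: g_notin; exists e => // x.
  apply: (mulfI (character_neq0 x (character_conjC gc))).
  by rewrite prod1 mulrC character_mul_conj.
Qed.

Lemma exists_dissociated_spanning (T : eqType) (sp : seq T) (chs : T -> G -> CC) :
  (forall t, t \in sp -> is_character (chs t)) ->
  exists2 lam : seq T, {subset lam <= sp} &
    dissociated (map chs lam) /\ forall t, t \in sp -> in_span (map chs lam) (chs t).
Proof.
elim: sp => [|t sp IHsp] spc; first by exists [::] => //; split=> [[|c e] //|//].
have sp_sub : {subset sp <= t :: sp} by move=> t' t'sp; rewrite inE t'sp orbT.
have [lam lam_sp [lamd lam_span]] := IHsp (fun t' t'sp => spc t' (sp_sub t' t'sp)).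
have lamc : all_characters (map chs lam).
  by move=> l /List.in_map_iff[t' [<- /In_mem/lam_sp/sp_sub/spc]].
have [t_span|t_notin] := classic (in_span (map chs lam) (chs t)).
  exists lam => [t' /lam_sp/sp_sub //|]; split=> // t'.
  by rewrite inE => /orP[/eqP->|/lam_span].
exists (t :: lam) => [t'|].
  by rewrite !inE => /orP[->|/lam_sp->]; rewrite ?orbT.
split; first by apply: dissociated_cons => //; apply: spc; rewrite inE eqxx.
move=> t'; rewrite inE => /orP[/eqP->|/lam_span]; first exact: in_span_head.
exact: in_span_cons.
Qed.

Lemma norm_signpow_sub1 c z : `|signpow c z - 1| <= `|z - 1|.
Proof.
rewrite /signpow; case: ifP => _; first by rewrite subrr normr0.
by case: ifP => _ //; rewrite -conjC1 -rmorphB norm_conjC conjC1.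
Qed.

Lemma norm_signed_prod_sub1 lam e x (r : CC) : all_characters lam ->
  (forall l, List.In l lam -> `|l x - 1| <= r) ->
  `|signed_prod lam e x - 1| <= (size lam)%:R * r.
Proof.
elim: lam e => [|l lam IHlam] [|c e] lamc lam_r /=; rewrite ?subrr ?normr0 ?mul0r //.
  by rewrite mulr_ge0 // (le_trans _ (lam_r l _)) //; left.
have c1 : `|signpow c (l x)| = 1.
  by apply: (signpow_character c (lamc l _)).1; left.
rewrite (le_trans (norm_mul_sub1 _ c1)) // -addn1 natrD mulrDl mul1r addrC lerD //.
  apply: IHlam => [|l' l'lam]; first exact: all_characters_behead lamc.
  by apply: lam_r; right.
by rewrite (le_trans (norm_signpow_sub1 _ _)) //; apply: lam_r; left.
Qed.

End Dissociated.

Lemma expR_mul_le_chord (t v : RR) : -1 <= v <= 1 ->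
  expR (t * v) <= (1 + v) / 2 * expR t + (1 - v) / 2 * expR (- t).
Proof.
case/andP=> v_ge v_le; have p0 : 0 <= (1 + v) / 2 by lra.
have p1 : (1 + v) / 2 <= 1 by lra.
have := convex_expR (Itv01 p0 p1) t (- t); rewrite !convRE /= /unstable.onem.
have -> : (1 - v) / 2 = 1 - (1 + v) / 2 by field.
by have -> : (1 + v) / 2 * t + (1 - (1 + v) / 2) * - t = t * v by field.
Qed.

Lemma expR_mean_le (T : finType) (A : {set T}) (z : T -> RR) : (0 < #|A|)%N ->
  #|A|%:R * expR ((\sum_(a in A) z a) / #|A|%:R) <= \sum_(a in A) expR (z a).
Proof.
move=> A_gt0; set m := (\sum_(a in A) z a) / #|A|%:R.
have A_neq0 : #|A|%:R != 0 :> RR by rewrite pnatr_eq0 -lt0n.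
apply: le_trans (_ : \sum_(a in A) expR m * (1 + (z a - m)) <= _).
  have sum_z : \sum_(a in A) z a = #|A|%:R * m by rewrite /m mulrC divfK.
  have -> : \sum_(a in A) expR m * (1 + (z a - m)) = expR m * #|A|%:R.
    rewrite -mulr_sumr !big_split /= sumrN !sumr_const sum_z.
    by rewrite -[m *+ _]mulr_natl subrr addr0.
  by rewrite mulrC.
apply: ler_sum => a _; rewrite -{2}(subrK m (z a)) expRD mulrC.
by rewrite ler_pM2r ?expR_gt0 // expR_ge1Dx.
Qed.

Lemma ln2_gt0 (R : realType) : 0 < ln (2 : R).
Proof. by rewrite ln_gt0 // ltr1n. Qed.

Definition chang_const : RR := ln 2 / 2 - ln (5 / 4).

Lemma chang_const_gt0 : 0 < chang_const.
Proof.
have : ln ((5 / 4 : RR) ^+ 2) < ln 2 by rewrite ltr_ln ?posrE ?exprn_gt0 //; lra.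
by rewrite /chang_const lnXn ?[ln _ *+ 2]mulr2n; lra.
Qed.

Section Chang.
Variables (G : finZmodType) (A : {set G}).
Implicit Types (l : G -> CC) (lam : seq (G -> CC)).
Local Notation beta := (3 / 5 : RR).

Definition phase l : CC := (fourier A l)^* / `|fourier A l|.
Definition re_phase l x : RR := complex.Re (phase l * l x).
Definition riesz lam x : RR := \prod_(l <- lam) (1 + beta * re_phase l x).

Lemma phase_mul_fourier l : phase l * fourier A l = `|fourier A l|.
Proof.
rewrite /phase mulrAC [(fourier A l)^* * _]mulrC -normCK expr2.
by have [->|nz] := eqVneq `|fourier A l| 0; rewrite ?mul0r ?mulfK.
Qed.

Lemma norm_phase l : fourier A l != 0 -> `|phase l| = 1.
Proof.
by move=> nz; rewrite normrM normfV norm_conjC normr_id divff // normr_eq0.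
Qed.

Lemma re_phase_bounds l x : is_character l -> fourier A l != 0 ->
  -1 <= re_phase l x <= 1.
Proof.
move=> lc nz; set z := phase l * l x.
have z1 : (complex.Re z) ^+ 2 + (complex.Im z) ^+ 2 = 1.
  apply: complex.complexI; rewrite complex.add_Re2_Im2 normrM norm_phase //.
  by rewrite lc.1 mulr1 expr1n.
by rewrite /re_phase -/z; apply/andP; split; nra.
Qed.

Lemma sum_re_phase l : \sum_(a in A) re_phase l a = complex.Re `|fourier A l|.
Proof. by rewrite /re_phase -raddf_sum /= -mulr_sumr phase_mul_fourier. Qed.

Lemma riesz_factorC l x : (1 + beta * re_phase l x)%:C%C =
  1 + (beta / 2)%:C%C * (phase l * l x) + (beta / 2)%:C%C * ((phase l)^* * (l x)^*).
Proof.
have ReJ (z : CC) : (complex.Re z)%:C%C = (z + z^*) / 2 := complex.ReJ_add z.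
rewrite rmorphD rmorph1 rmorphM /= /re_phase ReJ.
have -> : (beta / 2)%:C%C = beta%:C%C / 2.
  by rewrite rmorphM /= rmorphV ?unitfE ?pnatr_eq0 //= rmorph_nat.
by rewrite [(phase l * l x)^*]rmorphM /=; ring.
Qed.

Lemma sum_riesz_cons lam l (chi : G -> CC) :
  \sum_x chi x * (riesz (l :: lam) x)%:C%C =
    \sum_x chi x * (riesz lam x)%:C%C
  + (beta / 2)%:C%C * phase l * \sum_x (chi x * l x) * (riesz lam x)%:C%C
  + (beta / 2)%:C%C * (phase l)^* * \sum_x (chi x * (l x)^*) * (riesz lam x)%:C%C.
Proof.
rewrite !mulr_sumr -!big_split /=; apply: eq_bigr => x _.
by rewrite /riesz big_cons rmorphM /= riesz_factorC; ring.
Qed.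

Lemma sum_character_riesz_eq0 lam (chi : G -> CC) :
  all_characters lam -> is_character chi ->
  (forall e, size e = size lam -> exists x, chi x * signed_prod lam e x != 1) ->
  \sum_x chi x * (riesz lam x)%:C%C = 0.
Proof.
elim: lam chi => [|l lam IHlam] chi lamc chic chi_ne.
  have [x0 /=] := chi_ne [::] erefl; rewrite mulr1 => chix0.
  rewrite (eq_bigr chi) ?(sum_character_eq0 chic chix0) // => x _.
  by rewrite /riesz big_nil mulr1.
have lamc' := all_characters_behead lamc.
have lc : is_character l by apply: lamc; left.
have chi_ne_cons c e : size e = size lam ->
    exists x, chi x * (signpow c (l x) * signed_prod lam e x) != 1.
  by move=> se; apply: (chi_ne (c :: e)); rewrite /= se.
have sum0 : \sum_x chi x * (riesz lam x)%:C%C = 0.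
  apply: IHlam => // e /(chi_ne_cons 0)[x].
  by rewrite signpow0 mul1r; exists x.
have sum1 : \sum_x (chi x * l x) * (riesz lam x)%:C%C = 0.
  apply: IHlam; [done | exact: character_mulf | move=> e /(chi_ne_cons 1)[x]].
  by rewrite signpow1 mulrA; exists x.
have sumN1 : \sum_x (chi x * (l x)^*) * (riesz lam x)%:C%C = 0.
  apply: IHlam; [done | exact: character_mulf chic (character_conjC lc) |].
  move=> e /(chi_ne_cons (-1))[x].
  by rewrite signpowN1 mulrA; exists x.
by rewrite sum_riesz_cons sum0 sum1 sumN1 !mulr0 !addr0.
Qed.

Lemma sum_riesz lam : all_characters lam -> dissociated lam ->
  \sum_x riesz lam x = #|G|%:R.
Proof.
move=> lamc lamd; apply: complex.complexI; rewrite rmorph_sum rmorph_nat /=.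
elim: lam lamc lamd => [|l lam IHlam] lamc lamd.
  by rewrite (eq_bigr (fun _ => 1)) ?sumr_const // => x _; rewrite /riesz big_nil.
have lamc' := all_characters_behead lamc.
have lc : is_character l by apply: lamc; left.
have sum1 : \sum_x 1 * l x * (riesz lam x)%:C%C = 0.
  apply: sum_character_riesz_eq0 => //; first exact: character_mulf (@character1 G) lc.
  move=> e se; have [|//|x] := lamd (1 :: e); first by rewrite /= se.
  by exists x; rewrite mul1r.
have sumN1 : \sum_x 1 * (l x)^* * (riesz lam x)%:C%C = 0.
  apply: sum_character_riesz_eq0 => //.
    exact: character_mulf (@character1 G) (character_conjC lc).
  move=> e se; have [|//|x] := lamd (-1 :: e); first by rewrite /= se.
  by exists x; rewrite mul1r.
have := sum_riesz_cons lam l (fun _ => 1).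
rewrite sum1 sumN1 !mulr0 !addr0 !(eq_bigr _ (fun x _ => mul1r _)) => ->.
by rewrite IHlam //; apply: dissociated_behead lamd.
Qed.

(* (5/4) (1 + 3/5 v) is the chord of v |-> 2 ^ v over [-1, 1]. *)
Lemma expR_le_riesz lam x : all_characters lam ->
  (forall l, List.In l lam -> fourier A l != 0) ->
  expR (ln 2 * \sum_(l <- lam) re_phase l x) <= (5 / 4) ^+ size lam * riesz lam x.
Proof.
elim: lam => [|l lam IHlam] lamc lam_neq0.
  by rewrite /riesz !big_nil mulr0 expR0 expr0 mulr1.
have lc : is_character l by apply: lamc; left.
have /(expR_mul_le_chord (ln 2)) := re_phase_bounds x lc (lam_neq0 l (or_introl erefl)).
rewrite expRN lnK ?posrE // => chord.
rewrite /riesz !big_cons mulrDr expRD exprS mulrACA.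
apply: ler_pM; rewrite ?expR_ge0 //; first by apply: le_trans chord _; lra.
apply: IHlam => [|l' l'lam]; first exact: all_characters_behead lamc.
by apply: lam_neq0; right.
Qed.

Lemma sum_re_phase_ge lam :
  (forall l, List.In l lam -> #|A|%:R <= 2 * `|fourier A l|) ->
  (size lam)%:R * #|A|%:R / 2 <= \sum_(a in A) \sum_(l <- lam) re_phase l a.
Proof.
rewrite exchange_big /=; elim: lam => [|l lam IHlam] lam_large.
  by rewrite big_nil !mul0r.
rewrite big_cons /= -addn1 natrD !mulrDl mul1r addrC lerD //.
  by apply: IHlam => l' l'lam; apply: lam_large; right.
have := lam_large l (or_introl erefl); rewrite sum_re_phase.
rewrite -(RRe_real (normr_real (fourier A l))) -(rmorph_nat (real_complex RR)).
rewrite -[2 : CC](rmorph_nat (real_complex RR)) -rmorphM /= complex.lecR.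
lra.
Qed.

Lemma chang_bound lam : all_characters lam -> dissociated lam -> (0 < #|A|)%N ->
  (forall l, List.In l lam -> #|A|%:R <= 2 * `|fourier A l|) ->
  (size lam)%:R * chang_const <= ln (#|G|%:R : RR) - ln #|A|%:R.
Proof.
move=> lamc lamd A_gt0 lam_large; set d := size lam.
have lam_neq0 l : List.In l lam -> fourier A l != 0.
  move/lam_large; apply: contraTneq => ->.
  by rewrite normr0 mulr0 lern0 -lt0n.
have G_gt0 : (0 < #|G|)%N by apply/card_gt0P; exists 0.
have ln2_pos := ln2_gt0 RR.
have key : #|A|%:R * expR (ln 2 * d%:R / 2) <= (5 / 4 : RR) ^+ d * #|G|%:R.
  rewrite -(sum_riesz lamc lamd) mulr_sumr.
  apply: le_trans (_ : \sum_(a in A) expR (ln 2 * \sum_(l <- lam) re_phase l a) <= _).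
    apply: le_trans (expR_mean_le _ A_gt0); rewrite ler_pM2l ?ltr0n // ler_expR.
    rewrite -mulr_sumr ler_pdivlMr ?ltr0n //.
    by have := ler_wpM2l (ltW ln2_pos) (sum_re_phase_ge lam_large); lra.
  apply: le_trans (_ : \sum_x expR (ln 2 * \sum_(l <- lam) re_phase l x) <= _).
    by rewrite [X in _ <= X](bigID (fun x => x \in A)) /= lerDl sumr_ge0.
  by apply: ler_sum => x _; apply: expR_le_riesz.
move: key; rewrite -ler_ln ?posrE ?mulr_gt0 ?expR_gt0 ?exprn_gt0 ?ltr0n ?G_gt0 //.
rewrite lnM ?posrE ?expR_gt0 ?ltr0n // [ln (_ * _)]lnM ?posrE ?exprn_gt0 ?ltr0n ?G_gt0 //.
rewrite lnXn // -[ln (5 / 4) *+ d]mulr_natl expRK /chang_const.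
lra.
Qed.

End Chang.

Lemma ln_two_div_ratio (a n : nat) : (0 < a <= n)%N ->
  ln (2 / (a%:R / n%:R) : RR) = ln 2 + (ln n%:R - ln a%:R).
Proof.
case/andP=> a_gt0 a_le_n; have n_gt0 := leq_trans a_gt0 a_le_n.
rewrite !ln_div ?posrE ?divr_gt0 ?ltr0n //; ring.
Qed.

Lemma ln_ratio_ge0 (a n : nat) : (0 < a <= n)%N -> 0 <= ln (n%:R : RR) - ln a%:R.
Proof.
case/andP=> a_gt0 a_le_n; have n_gt0 := leq_trans a_gt0 a_le_n.
by rewrite subr_ge0 ler_ln ?posrE ?ltr0n ?ler_nat.
Qed.

Lemma exists_moment_exponent (a n : nat) : (0 < a <= n)%N ->
  exists j, (n < 4 ^ j * a)%N /\
            j.+1%:R * ln (2 : RR) <= 2 * ln (2 / (a%:R / n%:R)).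
Proof.
move=> aGn; have ratio_ge0 := ln_ratio_ge0 aGn.
case/andP: aGn => a_gt0 a_le_n; have n_gt0 := leq_trans a_gt0 a_le_n.
set q := (n %/ a)%N; set t := trunc_log 2 q.
have q_gt0 : (0 < q)%N by rewrite divn_gt0.
exists t.+1; split.
  have n_lt : (n < q.+1 * a)%N.
    by rewrite {1}(divn_eq n a) mulSn addnC ltn_add2r ltn_pmod.
  apply: (leq_trans n_lt); rewrite leq_mul2r; apply/orP; right.
  by apply: leq_trans (trunc_log_ltn q (isT : (1 < 2)%N)) _; rewrite leq_exp2r.
have t_le : t%:R * ln (2 : RR) <= ln n%:R - ln a%:R.
  rewrite -ln_div ?posrE ?ltr0n ?n_gt0 // mulr_natl -lnXn //.
  rewrite ler_ln ?posrE ?divr_gt0 ?exprn_gt0 ?ltr0n ?n_gt0 //.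
  rewrite ler_pdivlMr ?ltr0n // -natrX -natrM ler_nat.
  have q_lower := trunc_logP (isT : (1 < 2)%N) q_gt0.
  exact: leq_trans (leq_mul q_lower (leqnn a)) (leq_divM n a).
rewrite ln_two_div_ratio ?a_gt0 // -addn2 natrD; lra.
Qed.

Lemma Re_ge_N1 (z : CC) : `|z| = 1 -> -1 <= complex.Re z.
Proof.
move=> z1; have := complex.normc_ge_Re z.
rewrite z1 -(rmorph1 (real_complex RR)) complex.lecR ler_norml.
by case/andP.
Qed.

Lemma Re_ge0_near1 (z : CC) : `|z| = 1 -> `|z - 1| <= 1 -> 0 <= complex.Re z.
Proof.
move=> z1 /(exprn_ile1 2 (normr_ge0 _)).
rewrite -complex.add_Re2_Im2 -(rmorph1 (real_complex RR)) complex.lecR.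
have := complex.add_Re2_Im2 z; rewrite z1 expr1n -(rmorph1 (real_complex RR)).
move/complex.complexI; case: z z1 => p q _ /=; nra.
Qed.

Lemma Re_realC_mul_conj (r : RR) (z : CC) :
  complex.Re (r%:C%C * z^*) = r * complex.Re z.
Proof. by case: z => p q /=; ring. Qed.

Section LargeSpectrum.
Variables (G : finZmodType) (A : {set G}).
Local Notation M := (Zp_trunc #|G|).+2.
Variable w : CC.
Hypothesis w_prim : M.-primitive_root w.
Implicit Types f : {ffun G -> 'I_M}.

Definition large_spectrum : seq {ffun G -> 'I_M} :=
  [seq f <- enum {ffun G -> 'I_M} | is_hom f && (#|A|%:R <= 2 * `|fourier A (chi w f)|)].

Definition nfourier f : RR := complex.Re `|fourier A (chi w f)|.

Lemma mem_large_spectrum f : (f \in large_spectrum) =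
  is_hom f && (#|A|%:R <= 2 * `|fourier A (chi w f)|).
Proof. by rewrite mem_filter mem_enum andbT. Qed.

Lemma large_spectrum_character f :
  f \in large_spectrum -> is_character (chi w f).
Proof.
by rewrite mem_large_spectrum => /andP[fh _]; exact: (chi_character w_prim fh).
Qed.

Lemma large_spectrum_all_characters lam : {subset lam <= large_spectrum} ->
  all_characters (map (chi w) lam).
Proof.
move=> lam_large l /List.in_map_iff[f [<- /In_mem/lam_large]].
exact: large_spectrum_character.
Qed.

Lemma large_spectrum_basis : (0 < #|A| <= #|G|)%N ->
  exists lam : seq {ffun G -> 'I_M}, [/\ all_characters (map (chi w) lam),
    forall f, f \in large_spectrum -> in_span (map (chi w) lam) (chi w f)
    & (size lam)%:R * chang_const <= ln (2 / (#|A|%:R / #|G|%:R))].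
Proof.
move=> aGn; have [lam lam_large [lamd spanned]] :=
  exists_dissociated_spanning large_spectrum_character.
have lamc := large_spectrum_all_characters lam_large.
have lam_large_fourier l : List.In l (map (chi w) lam) ->
    #|A|%:R <= 2 * `|fourier A l|.
  move=> /List.in_map_iff[f [<- /In_mem/lam_large]].
  by rewrite mem_large_spectrum => /andP[].
exists lam; split => //.
have := chang_bound lamc lamd (andP aGn).1 lam_large_fourier.
rewrite size_map ln_two_div_ratio //; have := ln2_gt0 RR; lra.
Qed.

Lemma nfourierE f : `|fourier A (chi w f)| = (nfourier f)%:C%C.
Proof. by rewrite complex.RRe_real ?normr_real. Qed.

Lemma nfourier_ge0 f : 0 <= nfourier f.
Proof. by rewrite -complex.lecR rmorph0 -nfourierE. Qed.

Lemma nfourier0 : nfourier 0 = #|A|%:R.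
Proof.
rewrite /nfourier /fourier (eq_bigr (fun _ => 1)) => [|a _]; last exact: chi0.
by rewrite sumr_const normr_nat -(rmorph_nat (real_complex RR)).
Qed.

Lemma parseval_nfourier :
  \sum_(f | is_hom f) nfourier f ^+ 2 = (#|G| * #|A|)%:R.
Proof.
apply: complex.complexI; rewrite rmorph_sum rmorph_nat -(parseval w_prim A).
by apply: eq_bigr => f _; rewrite rmorphXn /= -nfourierE normCK.
Qed.

Lemma sum_moment_Re_eq0 j x : ~ iter_diff j.+1 A x ->
  \sum_(f | is_hom f) (nfourier f ^+ 2) ^+ j * nfourier f ^+ 2 *
    complex.Re (chi w f x) = 0.
Proof.
move/(sum_fourier_notin_iter_diff w_prim)/(congr1 (@complex.Re RR)).
rewrite raddf_sum /= => moment; apply: etrans moment; apply: eq_bigr => f _.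
rewrite -normCK normrX nfourierE -!rmorphXn Re_realC_mul_conj.
by rewrite -!exprM -exprD mulnC mulSn addnC.
Qed.

Lemma moment_term_ge0 j x f : is_hom f ->
  (f \in large_spectrum -> 0 <= complex.Re (chi w f x)) ->
  0 <= (nfourier f ^+ 2) ^+ j * nfourier f ^+ 2 * complex.Re (chi w f x)
       + ((#|A|%:R / 2) ^+ 2) ^+ j * nfourier f ^+ 2.
Proof.
move=> fh Re_ge0; set N := nfourier f; set V := (N ^+ 2) ^+ j * N ^+ 2.
have V_ge0 : 0 <= V by rewrite /V mulr_ge0 ?exprn_ge0 ?nfourier_ge0.
have [f_large|f_small] := boolP (f \in large_spectrum).
  by move/Re_ge0: f_large => ?; rewrite addr_ge0 ?mulr_ge0 ?exprn_ge0 ?nfourier_ge0.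
have N_small : N <= #|A|%:R / 2.
  move: f_small; rewrite mem_large_spectrum fh /= nfourierE.
  rewrite -!(rmorph_nat (real_complex RR)) -rmorphM complex.lecR -/N; lra.
have : V <= ((#|A|%:R / 2) ^+ 2) ^+ j * N ^+ 2.
  rewrite ler_wpM2r ?sqr_ge0 //; apply: lerXn2r; rewrite ?nnegrE ?sqr_ge0 //.
  by apply: lerXn2r; rewrite ?nnegrE ?nfourier_ge0 // (le_trans (nfourier_ge0 f)).
have : - V <= V * complex.Re (chi w f x).
  by rewrite -mulrN1 ler_wpM2l // Re_ge_N1 // (chi_character w_prim fh).1.
lra.
Qed.

Lemma iter_diff_of_Re_chi_ge0 j x : (#|G| < 4 ^ j * #|A|)%N ->
  (forall f, f \in large_spectrum -> 0 <= complex.Re (chi w f x)) ->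
  iter_diff j.+1 A x.
Proof.
move=> G_small Re_ge0; apply: NNPP => /sum_moment_Re_eq0 moment.
set a : RR := #|A|%:R; set X := ((a / 2) ^+ 2) ^+ j.
have a_pos : 0 < a.
  by have := leq_ltn_trans (leq0n _) G_small; rewrite muln_gt0 ltr0n => /andP[].
have total : \sum_(f | is_hom f) ((nfourier f ^+ 2) ^+ j * nfourier f ^+ 2 *
    complex.Re (chi w f x) + X * nfourier f ^+ 2) = X * (#|G| * #|A|)%:R.
  by rewrite big_split /= moment add0r -mulr_sumr parseval_nfourier.
have : (a ^+ 2) ^+ j * a ^+ 2 <= X * (#|G| * #|A|)%:R.
  rewrite -total (bigD1 (0 : {ffun G -> 'I_M})) ?is_hom0 //= nfourier0 chi0 -/a.
  have rest_ge0 : 0 <= \sum_(f | is_hom f && (f != 0)) ((nfourier f ^+ 2) ^+ j *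
      nfourier f ^+ 2 * complex.Re (chi w f x) + X * nfourier f ^+ 2).
    by apply: sumr_ge0 => f /andP[fh _]; exact: moment_term_ge0 fh (Re_ge0 f).
  have : 0 <= X * a ^+ 2 by rewrite mulr_ge0 ?sqr_ge0 // exprn_ge0 ?sqr_ge0.
  have -> : complex.Re (1 : CC) = 1 by [].
  lra.
have -> : X = (a ^+ 2) ^+ j / 4 ^+ j.
  by rewrite /X !expr_div_n; congr (_ / _ ^+ _); rewrite expr2 -natrM.
rewrite -mulrA ler_pM2l ?exprn_gt0 ?exprn_gt0 // mulrC ler_pdivlMr ?exprn_gt0 //.
move: G_small; rewrite -(ltr_nat RR) !natrM natrX -/a; nra.
Qed.

Lemma bohr_subset_iter_diff lam rho j x : all_characters (map (chi w) lam) ->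
  (forall f, f \in large_spectrum -> in_span (map (chi w) lam) (chi w f)) ->
  (size lam)%:R * rho <= 1 -> (#|G| < 4 ^ j * #|A|)%N ->
  bohr (map (chi w) lam) rho x -> iter_diff j.+1 A x.
Proof.
move=> lamc spanned small G_small xB.
apply: iter_diff_of_Re_chi_ge0 G_small _ => f f_large.
apply: Re_ge0_near1; first exact: (large_spectrum_character f_large).1.
have [e _ ->] := spanned f f_large.
apply: le_trans (norm_signed_prod_sub1 e lamc xB) _.
rewrite size_map -(rmorph_nat (real_complex RR)) -rmorphM.
by rewrite -(rmorph1 (real_complex RR)) complex.lecR.
Qed.

End LargeSpectrum.

Theorem lemmaB14 :
  exists c C : RR, 0 < c /\ 0 < C /\
    forall (G : finZmodType) (A : {set G}), A != set0 ->
      let alpha : RR := (#|A|%:R / #|G|%:R) in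
      exists (S : seq (G -> CC)) (rho : RR) (k : nat),
        (forall gamma, List.In gamma S -> is_character gamma) /\
        (size S)%:R <= C * ln (2 / alpha) /\
        c / ln (2 / alpha) <= rho /\
        (0 < k)%N /\ k%:R <= C * ln (2 / alpha) /\
        (forall x : G, bohr S rho x -> iter_diff k A x).
Proof.
have kappa_pos := chang_const_gt0; have ln2_pos := ln2_gt0 RR.
exists chang_const, (chang_const^-1 + 2 / ln 2); do 2?split => //.
  by rewrite addr_gt0 ?invr_gt0 ?divr_gt0.
move=> G A A_neq0 alpha; set L := ln (2 / alpha).
have aGn : (0 < #|A| <= #|G|)%N by rewrite card_gt0 A_neq0 max_card.
have L_pos : 0 < L.
  by rewrite /L /alpha ln_two_div_ratio //; have := ln_ratio_ge0 aGn; lra.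
have [j [G_small j_le]] := exists_moment_exponent aGn.
have [w w_prim] := prim_root_exists CC (ltn0Sn (Zp_trunc #|G|).+1).
have [lam [lamc spanned size_le]] := large_spectrum_basis w_prim aGn.
exists (map (chi w) lam), (chang_const / L), j.+1; split => //.
rewrite size_map; split.
  rewrite mulrDl; apply: ler_wpDr; first by rewrite mulr_ge0 ?divr_ge0 ?ltW.
  by rewrite mulrC ler_pdivlMr.
do 2?split => //; split.
  rewrite mulrDl; apply: ler_wpDl; first by rewrite mulr_ge0 ?invr_ge0 ?ltW.
  by rewrite mulrAC ler_pdivlMr.
move=> x; apply: (bohr_subset_iter_diff w_prim lamc spanned _ G_small).
by rewrite mulrA ler_pdivrMr // mul1r.
Qed.
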